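(* Let $(X,\tau)$ be a topological space which is not statistically compact, let $\infty^X$ be a point not in $X$, $X^s=X\cup\{\infty^X\}$, and $\tau^X_s=\tau\cup\{X^s\setminus C: C \text{ is a closed and statistically compact subset of } X\}$. Then $\tau^X_s$ is a topology on $X^s$ and $(X^s,\tau^X_s)$ is statistically compact.
   Context: For $A\subseteq\mathbb{N}$ let $d_n(A)=|A\cap\{1,\dots,n\}|/n$, $\overline{d}(A)=\limsup_n d_n(A)$, $\underline{d}(A)=\liminf_n d_n(A)$, and $d(A)$ their common value when equal. A sequence in $X$ is a map from an infinite subset $M\subseteq\mathbb{N}$ into $X$, written $(x_n)_{n\in M}$; a subsequence is $(x_n)_{n\in N}$ with $N\subseteq M$ infinite. It is nonthin if $\overline{d}(M)>0$. A nonthin sequence $(x_n)_{n\in M}$ is statistically convergent to $a\in X$ if for every open $U\ni a$, $d(\{n\in M:x_n\notin U\})=0$. A topological space is statistically compact if every nonthin sequence in it has a nonthin subsequence that is statistically convergent to some point of the space; a subset is statistically compact if it is so in the subspace topology. $(X^s,\tau^X_s)$ is called the one point statistical compactification of $X$. *)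

From HB Require Import structures.
From mathcomp Require Import all_boot all_order all_algebra.
From mathcomp Require Import all_classical all_reals all_analysis.
From mathcomp Require Import Rstruct Rstruct_topology.
Set Implicit Arguments. Unset Strict Implicit. Unset Printing Implicit Defensive.
Import Order.TTheory GRing.Theory Num.Theory.
Local Open Scope classical_set_scope.
Local Open Scope ring_scope.

Definition dens (A : set nat) (n : nat) : Rdefinitions.R :=
  (\sum_(1 <= i < n.+1) ((i \in A) : nat)%:R) / n%:R.

Definition upper_dens (A : set nat) : \bar Rdefinitions.R :=
  limn_esup (fun n => (dens A n)%:E).

Definition nonthin (M : set nat) : Prop := (0 < upper_dens M)%E.

(* (x_n)_{n in M} is statistically convergent to a, for the topology given by
   the family of open sets O : d({n in M : x_n notin U}) = 0 for every open U ∋ a *)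
Definition stat_conv (T : Type) (O : set (set T)) (M : set nat) (x : nat -> T)
  (a : T) : Prop :=
  forall U, O U -> U a ->
    (fun n => dens [set k | M k /\ ~ U (x k)] n) @ \oo --> (0 : Rdefinitions.R).

Definition stat_compact_on (T : Type) (O : set (set T)) (A : set T) : Prop :=
  forall (M : set nat) (x : nat -> T),
    infinite_set M -> nonthin M -> (forall n, M n -> A (x n)) ->
    exists (N : set nat) (a : T),
      [/\ N `<=` M, infinite_set N, nonthin N, A a & stat_conv O N x a].

Definition stat_compact (T : Type) (O : set (set T)) : Prop :=
  stat_compact_on O setT.

Definition subspace_opens (T : Type) (O : set (set T)) (A : set T) : set (set T) :=
  [set V | exists U, O U /\ V = U `&` A].

Definition stat_compact_subset (T : Type) (O : set (set T)) (A : set T) : Prop :=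
  stat_compact_on (subspace_opens O A) A.

Definition is_topology (T : Type) (O : set (set T)) : Prop :=
  [/\ O set0, O setT,
      (forall F : set (set T), F `<=` O -> O (\bigcup_(A in F) A))
    & (forall A B, O A -> O B -> O (A `&` B))].

(* one point statistical compactification: X^s = option X, infinity = None *)
Definition stat_opens (X : topologicalType) : set (set (option X)) :=
  [set V | exists U : set X, open U /\ V = Some @` U] `|`
  [set V | exists C : set X, [/\ closed C, stat_compact_subset (@open X) C
                                & V = ~` (Some @` C)]].
Arguments stat_opens X : clear implicits.

From mathcomp Require Import all_boot all_order all_algebra.
From mathcomp Require Import all_classical all_reals all_analysis.
From mathcomp Require Import Rstruct Rstruct_topology finmap.
Set Implicit Arguments. Unset Strict Implicit. Unset Printing Implicit Defensive.
Import Order.TTheory GRing.Theory Num.Theory.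
Local Open Scope classical_set_scope.
Local Open Scope ring_scope.
Local Notation R := Rdefinitions.R.

(** Sets of density zero form an ideal containing the finite sets, so a
  nonthin set remains nonthin on one of the two halves of any splitting.
  Consequently a union of two statistically compact sets is statistically
  compact, and so is a closed subset of one; this is exactly what makes
  [stat_opens X] closed under finite intersections and arbitrary unions.
  Given a nonthin sequence in [X^s], either its part lying in some closed
  statistically compact [C] is nonthin, and then a subsequence converges
  statistically in [C], hence in [X^s]; or all these parts have density
  zero, and then the sequence converges statistically to [∞], whose
  neighbourhoods are the complements of such [C]. *)

Definition dens_zero (A : set nat) : Prop := dens A @ \oo --> (0 : R).

Lemma dens_ge0 A n : 0 <= dens A n.
Proof. by rewrite /dens divr_ge0// sumr_ge0. Qed.

Lemma le_dens A B n : A `<=` B -> dens A n <= dens B n.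
Proof.
move=> AB; rewrite /dens ler_wpM2r ?invr_ge0//.
apply: ler_sum => i _; rewrite ler_nat.
by case: (boolP (i \in A)) => //= /set_mem /AB /mem_set ->.
Qed.

Lemma densU_le A B n : dens (A `|` B) n <= dens A n + dens B n.
Proof.
rewrite /dens -mulrDl ler_wpM2r ?invr_ge0// -big_split /=.
apply: ler_sum => i _; rewrite -natrD ler_nat.
case: (boolP (i \in A `|` B)) => //= /set_mem [] /mem_set -> //.
by rewrite addnC.
Qed.

Lemma dens_fset_le (X : {fset nat}) n : dens [set` X] n <= #|`X|%:R / n%:R.
Proof.
rewrite /dens ler_wpM2r ?invr_ge0// -natr_sum ler_nat.
rewrite (eq_bigr (fun i => if i \in [set` X] then 1 else 0)%N); last first.
  by move=> i _; case: (_ \in _).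
rewrite -big_mkcond sum1_count -size_filter.
apply: uniq_leq_size => [|i]; first exact/filter_uniq/iota_uniq.
by rewrite mem_filter => /andP[/set_mem].
Qed.

Lemma dens_zeroS A B : A `<=` B -> dens_zero B -> dens_zero A.
Proof.
move=> AB B0; apply: (@squeeze_cvgr _ _ _ _ (fun=> 0) (dens B)) => //.
  by apply: nearW => n; rewrite dens_ge0 le_dens.
exact: cvg_cst.
Qed.

Lemma dens_zeroU A B : dens_zero A -> dens_zero B -> dens_zero (A `|` B).
Proof.
move=> A0 B0; apply: (@squeeze_cvgr _ _ _ _ (fun=> 0) (fun n => dens A n + dens B n)).
- by apply: nearW => n; rewrite dens_ge0 densU_le.
- exact: cvg_cst.
- by have := @cvgD R R^o nat \oo _ _ _ _ _ A0 B0; rewrite addr0; apply.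
Qed.

Lemma finite_dens_zero A : finite_set A -> dens_zero A.
Proof.
move=> /finite_fsetP[X ->]; rewrite /dens_zero -cvg_shiftS.
apply: (@squeeze_cvgr _ _ _ _ (fun=> 0) (fun n => #|`X|%:R * harmonic n)).
- by apply: nearW => n; rewrite dens_ge0 dens_fset_le.
- exact: cvg_cst.
- by rewrite -(mulr0 #|`X|%:R); apply: cvgMl_tmp; exact: cvg_harmonic.
Qed.

Lemma nonthinP A : nonthin A <-> ~ dens_zero A.
Proof.
rewrite /nonthin /upper_dens; split => [A_nt A0|A_n0].
  move: A_nt; suff -> : limn_esup (fun n => (dens A n)%:E) = 0%E by rewrite ltxx.
  by apply: (cvg_limn_einf_sup _).2; apply: cvg_EFin => //; exact: nearW.
rewrite ltNge; apply/negP => le0; apply: A_n0.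
have /fine_cvg// : (dens A n)%:E @[n --> \oo] --> 0%E.
by apply: (limn_esup_le_cvg le0) => n; rewrite lee_fin dens_ge0.
Qed.

Lemma nonthinS A B : A `<=` B -> nonthin A -> nonthin B.
Proof. by move=> AB /nonthinP A_n0; apply/nonthinP => /(dens_zeroS AB). Qed.

Lemma nonthinU A B : nonthin (A `|` B) -> nonthin A \/ nonthin B.
Proof.
move=> /nonthinP AB_n0; apply: contrapT => /not_orP[/nonthinP/contrapT A0 /nonthinP/contrapT B0].
exact/AB_n0/dens_zeroU.
Qed.

Lemma nonthin_infinite A : nonthin A -> infinite_set A.
Proof. by move=> /nonthinP A_n0 /finite_dens_zero. Qed.

Definition stat_cluster (T : Type) (O : set (set T)) (A : set T) (M : set nat)
    (x : nat -> T) : Prop :=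
  exists N a, [/\ N `<=` M, infinite_set N, nonthin N, A a & stat_conv O N x a].

Section Subspace.
Variables (T : Type) (O : set (set T)).

Lemma stat_conv_subspace (C : set T) N x a : C a -> (forall k, N k -> C (x k)) ->
  stat_conv (subspace_opens O C) N x a <-> stat_conv O N x a.
Proof.
move=> Ca NC; split=> [conv U OU Ua|conv _ [U [OU ->]] [Ua _]].
  have OUC : subspace_opens O C (U `&` C) by exists U.
  by apply: dens_zeroS (conv _ OUC (conj Ua Ca)) => k [Nk nUk]; split=> // -[].
apply: dens_zeroS (conv U OU Ua) => k [Nk nUCk]; split=> // Uk.
by apply: nUCk; split=> //; exact: NC.
Qed.

Lemma stat_cluster_subspace (C' C : set T) M' M x : C' `<=` C -> M' `<=` M ->
  (forall n, M' n -> C' (x n)) ->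
  stat_cluster (subspace_opens O C') C' M' x -> stat_cluster (subspace_opens O C) C M x.
Proof.
move=> C'C M'M M'C' [N [a [NM' Ninf Nnt C'a conv]]].
have NC' k : N k -> C' (x k) by move=> /NM' /M'C'.
exists N, a; split=> //; [exact: subset_trans M'M | exact: C'C |].
apply/(stat_conv_subspace (C'C _ C'a)) => [k /NC' /C'C //|].
exact/(stat_conv_subspace C'a NC').
Qed.

Lemma stat_compact_subset0 : stat_compact_subset O set0.
Proof.
by move=> M x /infinite_setN0[n Mn] _ /(_ n Mn).
Qed.

Lemma stat_compact_subsetU (C1 C2 : set T) : stat_compact_subset O C1 ->
  stat_compact_subset O C2 -> stat_compact_subset O (C1 `|` C2).
Proof.
move=> C1sc C2sc M x _ Mnt MC.
pose M1 := [set n | M n /\ C1 (x n)]; pose M2 := [set n | M n /\ ~ C1 (x n)].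
have : nonthin (M1 `|` M2).
  by apply: nonthinS Mnt => n Mn; case: (pselect (C1 (x n))); [left|right].
have M2C2 n : M2 n -> C2 (x n) by move=> [Mn nC1]; case: (MC n Mn).
case/nonthinU => [M1nt|M2nt].
  have M1C1 n : M1 n -> C1 (x n) by case.
  have := C1sc M1 x (nonthin_infinite M1nt) M1nt M1C1.
  by apply: stat_cluster_subspace M1C1 => // n [].
have := C2sc M2 x (nonthin_infinite M2nt) M2nt M2C2.
by apply: stat_cluster_subspace M2C2 => // n [].
Qed.

End Subspace.

Section OnePointStatCompactification.
Variable X : topologicalType.

Lemma closed_stat_compact_subset (C D : set X) : closed D -> D `<=` C ->
  stat_compact_subset open C -> stat_compact_subset open D.
Proof.
move=> cD DC Csc M x Minf Mnt MD.
have MC n : M n -> C (x n) by move=> /MD /DC.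
have [N [a [NM Ninf Nnt Ca]]] := Csc M x Minf Mnt MC.
have ND k : N k -> D (x k) by move=> /NM /MD.
move=> /(stat_conv_subspace _ Ca (fun k Nk => MC k (NM k Nk))) conv.
have Da : D a.
  apply: contrapT => nDa; move/nonthinP: Nnt; apply.
  have oCD : open (~` D) by rewrite openC.
  by apply: dens_zeroS (conv _ oCD nDa) => k Nk; split=> //; apply; exact: ND.
by exists N, a; split=> //; exact/(stat_conv_subspace _ Da ND).
Qed.

Lemma preimage_Some_image (A : set X) : Some @^-1` (Some @` A) = A.
Proof. by apply/seteqP; split=> [y [z Az [<-]] // | y Ay]; exists y. Qed.

Lemma stat_opensP (V : set (option X)) : stat_opens X V <->
  open (Some @^-1` V) /\ (V None -> stat_compact_subset open (~` (Some @^-1` V))).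
Proof.
split=> [[[U [oU ->]]|[C [cC Csc ->]]]|[oV Vsc]].
- by rewrite preimage_Some_image; split=> // -[].
- by rewrite -preimage_setC setCK preimage_Some_image openC.
have [VN|nVN] := pselect (V None); [right|left].
  exists (~` (Some @^-1` V)); split; [by rewrite closedC | exact: Vsc |].
  apply/seteqP; split=> -[y|] //=.
  - by move=> Vy [z + [zy]]; rewrite zy.
  - by move=> _ [].
  - by move=> nV; apply: contrapT => nVy; apply: nV; exists y.
exists (Some @^-1` V); split=> //.
apply/seteqP; split=> -[y|] //=.
- by move=> Vy; exists y.
- by move=> [z + [<-]].
- by move=> [].
Qed.

Lemma stat_opens_topology : is_topology (stat_opens X).
Proof.
split.
- by apply/stat_opensP; rewrite preimage_set0; split=> [|[]]; exact: open0.
- apply/stat_opensP; rewrite preimage_setT setCT; split=> [|_]; first exact: openT.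
  exact: stat_compact_subset0.
- move=> F FO; apply/stat_opensP; rewrite preimage_bigcup.
  have oF : open (\bigcup_(V in F) Some @^-1` V).
    by apply: bigcup_open => V /FO /stat_opensP[].
  split=> // -[V0 FV0 V0N]; have /stat_opensP[_ V0sc] := FO _ FV0.
  apply: closed_stat_compact_subset (V0sc V0N); first by rewrite closedC.
  by apply: subsetC; exact: bigcup_sup.
- move=> A B /stat_opensP[oA Asc] /stat_opensP[oB Bsc]; apply/stat_opensP.
  rewrite preimage_setI setCI; split=> [|[AN BN]]; first exact: openI.
  exact: stat_compact_subsetU (Asc AN) (Bsc BN).
Qed.

Lemma stat_conv_Some N (y : nat -> X) x a : (forall k, N k -> x k = Some (y k)) ->
  stat_conv open N y a -> stat_conv (stat_opens X) N x (Some a).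
Proof.
move=> xy conv V /stat_opensP[oV _] Va.
by apply: dens_zeroS (conv _ oV Va) => k [Nk nVk]; split=> //; rewrite /= -xy.
Qed.

Lemma stat_conv_None M x :
  (forall C, closed C -> stat_compact_subset open C ->
     dens_zero [set k | M k /\ (Some @` C) (x k)]) ->
  stat_conv (stat_opens X) M x None.
Proof.
move=> thin V /stat_opensP[oV Vsc] VN.
have cC : closed (~` (Some @^-1` V)) by rewrite closedC.
apply: dens_zeroS (thin _ cC (Vsc VN)) => k [Mk nVk]; split=> //.
by case: (x k) nVk => [y nVy|/(_ VN)[]]; exists y.
Qed.

Lemma stat_compact_stat_opens : stat_compact (stat_opens X).
Proof.
move=> M x Minf Mnt _.
pose hits C := [set k | M k /\ (Some @` C) (x k)].
have [thin|] :=
  pselect (forall C, closed C -> stat_compact_subset open C -> dens_zero (hits C)).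
  by exists M, None; split=> //; exact: stat_conv_None.
move=> /existsNP[C /not_implyP[cC /not_implyP[Csc /nonthinP Cnt]]].
have [k0 [_ [y0 _ _]]] := infinite_setN0 (nonthin_infinite Cnt).
pose y n := odflt y0 (x n).
have hitsC n : hits C n -> x n = Some (y n) /\ C (y n).
  by move=> [_ [z Cz xz]]; rewrite /y -xz.
have [N [a [NM Ninf Nnt Ca]]] :=
  Csc _ y (nonthin_infinite Cnt) Cnt (fun n h => (hitsC n h).2).
move=> /(stat_conv_subspace _ Ca (fun k Nk => (hitsC k (NM k Nk)).2)) conv.
exists N, (Some a); split=> //; first by move=> k /NM[].
exact: stat_conv_Some (fun k Nk => (hitsC k (NM k Nk)).1) conv.
Qed.

End OnePointStatCompactification.

Theorem mainTheorem17 (X : topologicalType) :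
  ~ stat_compact (@open X) ->
  is_topology (stat_opens X) /\ stat_compact (stat_opens X).
Proof. by move=> _; split; [exact: stat_opens_topology | exact: stat_compact_stat_opens]. Qed.
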